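(* Let $\mathcal{L}$ be a square lattice. Then there exist natural numbers $n_1, \ldots, n_t$ such that $\mathcal{L}$ is isomorphic (as a lattice) to the product $c(n_1) \times c(n_2) \times \cdots \times c(n_t)$ of chain lattices.
   Context: All lattices are finite distributive. $x \in \mathcal{L}$ is join-irreducible if $x = y\vee z$ implies $x=y$ or $x=z$ (so the minimum of $\mathcal{L}$, called the root, is join-irreducible); $J(\mathcal{L})$ is the poset of join-irreducibles. $\mathcal{L}$ is a tree lattice if the Hasse diagram of $J(\mathcal{L})$ is a tree; a square lattice is a tree lattice in which every vertex of this Hasse diagram other than the root has degree at most two. $c(n)$ denotes the totally ordered lattice (chain) with $n$ elements; products of lattices carry the componentwise order. *)

From HB Require Import structures.
From mathcomp Require Import all_boot all_order.
Set Implicit Arguments. Unset Strict Implicit. Unset Printing Implicit Defensive.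
Import Order.TTheory.
Local Open Scope order_scope.

Section SquareLattice.
Context {disp : Order.disp_t} {L : finTBDistrLatticeType disp}.

(* x is join-irreducible: x = y `|` z implies x = y or x = z
   (so the root \bot is join-irreducible). *)
Definition join_irr (x : L) : bool :=
  [forall y : L, forall z : L, (x == y `|` z) ==> (x == y) || (x == z)].

Definition Jcovers (x y : L) : bool :=
  [&& join_irr x, join_irr y, x < y &
      [forall z : L, ~~ [&& join_irr z, x < z & z < y]]].

Definition hasseJ (x y : L) : bool := Jcovers x y || Jcovers y x.

Definition hasseJ_connected : Prop :=
  forall x y : L, join_irr x -> join_irr y -> connect hasseJ x y.

Definition hasseJ_acyclic : Prop :=
  forall s : seq L, uniq s -> 3 <= size s -> ~~ cycle hasseJ s.

Definition tree_lattice : Prop := hasseJ_connected /\ hasseJ_acyclic.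

Definition square_lattice : Prop :=
  tree_lattice /\
  forall x : L, join_irr x -> x != \bot -> #|[set y | hasseJ x y]| <= 2.

End SquareLattice.

From mathcomp Require Import all_boot all_order.
Set Implicit Arguments. Unset Strict Implicit. Unset Printing Implicit Defensive.
Import Order.TTheory.
Local Open Scope order_scope.

(* By acyclicity every non-root vertex of J(L) has a unique lower cover, and
   in a square lattice the degree bound leaves room for at most one upper
   cover, so J(L) minus its root is a disjoint union of chains, one above each
   atom of J(L).  Every element x of L is the join of the join-irreducibles
   below it, so x is determined by how many elements of each chain lie below
   it; these heights are the coordinates.  The sets of elements of a chain
   below x and below y are nested, so join and meet become max and min. *)

Section FinitePoset.
Variables (disp : Order.disp_t) (L : finPOrderType disp).
Implicit Types (x y : L) (P : pred L).

Definition down_card x := #|[set w | w < x]|.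
Definition up_card x := #|[set w | x < w]|.

Lemma down_card_lt x y : x < y -> (down_card x < down_card y)%N.
Proof.
move=> xy; apply/proper_card/properP; split.
  by apply/subsetP=> w; rewrite !inE => /lt_trans; apply.
by exists x; rewrite !inE ?ltxx.
Qed.

Lemma up_card_lt x y : x < y -> (up_card y < up_card x)%N.
Proof.
move=> xy; apply/proper_card/properP; split.
  by apply/subsetP=> w; rewrite !inE; apply: lt_trans.
by exists y; rewrite !inE ?ltxx.
Qed.

Lemma lt_ind (Q : L -> Prop) :
  (forall x, (forall y, y < x -> Q y) -> Q x) -> forall x, Q x.
Proof.
move=> IH x; have [n] := ubnP (down_card x).
elim: n x => // n IHn x /ltnSE hx; apply: IH => y yx.
exact/IHn/(leq_trans (down_card_lt yx)).
Qed.

Lemma gt_ind (Q : L -> Prop) :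
  (forall x, (forall y, x < y -> Q y) -> Q x) -> forall x, Q x.
Proof.
move=> IH x; have [n] := ubnP (up_card x).
elim: n x => // n IHn x /ltnSE hx; apply: IH => y xy.
exact/IHn/(leq_trans (up_card_lt xy)).
Qed.

Lemma exists_maximal P x : P x -> exists2 z, P z & forall w, P w -> ~~ (z < w).
Proof.
move=> Px; case: (arg_maxnP down_card Px) => z Pz zmax.
by exists z => // w /zmax /=; rewrite leqNgt; apply: contra; apply: down_card_lt.
Qed.

Lemma exists_minimal P x : P x -> exists2 z, P z & forall w, P w -> ~~ (w < z).
Proof.
move=> Px; case: (arg_minnP down_card Px) => z Pz zmin.
by exists z => // w /zmin; rewrite leqNgt; apply: contra; apply: down_card_lt.
Qed.

End FinitePoset.

Section JoinIrreducibles.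
Variables (disp : Order.disp_t) (L : finTBDistrLatticeType disp).
Implicit Types (a p q r x y z : L).

Lemma join_irr0 : join_irr (\bot : L).
Proof.
apply/forallP=> y; apply/forallP=> z; apply/implyP=> /eqP e.
by rewrite eq_le le0x e leUl.
Qed.

Lemma join_irr_leU p x y : join_irr p -> p <= x `|` y -> (p <= x) || (p <= y).
Proof.
move=> /forallP/(_ (p `&` x))/forallP/(_ (p `&` y))/implyP jp le_pxy.
have : p == (p `&` x) `|` (p `&` y) by rewrite -meetUr (meet_idPl le_pxy).
by move/jp; rewrite ![p == _]eq_sym -!leEmeet.
Qed.

Lemma le_join_irr x y : (forall p, join_irr p -> p <= x -> p <= y) -> x <= y.
Proof.
elim/lt_ind: x => x IH lexy; have [jx|] := boolP (join_irr x); first exact: lexy.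
case/forallPn=> u /forallPn[v]; rewrite negb_imply negb_or.
case/andP=> /eqP x_uv /andP[xu xv].
have ux : u < x by rewrite lt_neqAle eq_sym xu x_uv leUl.
have vx : v < x by rewrite lt_neqAle eq_sym xv x_uv leUr.
rewrite x_uv leUx !IH // => p jp pw; apply: lexy => //.
- exact: le_trans pw (ltW vx).
- exact: le_trans pw (ltW ux).
Qed.

Lemma hasseJ_sym : symmetric (@hasseJ _ L).
Proof. by move=> x y; rewrite /hasseJ orbC. Qed.

Lemma JcoversP x y :
  reflect [/\ join_irr x, join_irr y, x < y &
             forall z, join_irr z -> x < z -> ~~ (z < y)] (Jcovers x y).
Proof.
apply: (iffP and4P) => -[jx jy xy H]; split=> //.
  by move=> z jz xz; have := forallP H z; rewrite jz xz.
by apply/forallP=> z; apply/negP=> /and3P[jz xz]; apply/negP; apply: H.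
Qed.

Lemma Jcovers_lt x y : Jcovers x y -> x < y.
Proof. by case/JcoversP. Qed.

Lemma exists_Jcovers_below p r : join_irr p -> join_irr r -> p < r ->
  exists z, [/\ join_irr z, p <= z & Jcovers z r].
Proof.
move=> jp jr pr.
have [|z /and3P[jz pz zr] zmax] :=
  @exists_maximal _ _ (fun z => [&& join_irr z, p <= z & z < r]) p.
  by rewrite jp lexx.
exists z; split=> //; apply/JcoversP; split=> // w jw zw; apply/negP=> wr.
by move: (zmax w); rewrite jw wr (le_trans pz (ltW zw)) zw => /(_ isT).
Qed.

Lemma exists_Jcovers_above r p : join_irr r -> join_irr p -> r < p ->
  exists z, [/\ join_irr z, Jcovers r z & z <= p].
Proof.
move=> jr jp rp.
have [|z /and3P[jz rz zp] zmin] :=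
  @exists_minimal _ _ (fun z => [&& join_irr z, r < z & z <= p]) p.
  by rewrite jp rp lexx.
exists z; split=> //; apply/JcoversP; split=> // w jw rw; apply/negP=> wz.
by move: (zmin w); rewrite jw rw (le_trans (ltW wz) zp) wz => /(_ isT).
Qed.

Definition atoms : {set L} := [set a | Jcovers \bot a].
Definition branch a : {set L} := [set q | join_irr q && (a <= q)].
Definition branch_below a x : {set L} :=
  [set q | [&& join_irr q, a <= q & q <= x]].

Lemma atomP a : a \in atoms ->
  [/\ join_irr a, a != \bot & forall w, join_irr w -> w < a -> w = \bot].
Proof.
rewrite inE => /JcoversP[_ ja a_gt0 H]; split; rewrite -?lt0x //.
move=> w jw wa; case: (eqVneq w \bot) => // w_neq0.
by move: (H w jw); rewrite lt0x w_neq0 wa => /(_ isT).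
Qed.

Lemma exists_atom_le p : join_irr p -> p != \bot -> exists2 a, a \in atoms & a <= p.
Proof.
move=> jp p_neq0.
have [|a /and3P[ja a_neq0 ap] amin] :=
  @exists_minimal _ _ (fun z => [&& join_irr z, z != \bot & z <= p]) p.
  by rewrite jp p_neq0 lexx.
exists a => //; rewrite inE; apply/JcoversP; split; rewrite ?join_irr0 ?lt0x //.
move=> w jw w_gt0; apply/negP=> wa.
by move: (amin w); rewrite jw -lt0x w_gt0 (le_trans (ltW wa) ap) wa => /(_ isT).
Qed.

Lemma branch_below_sub a x : branch_below a x \subset branch a.
Proof. by apply/subsetP=> q; rewrite !inE => /and3P[-> ->]. Qed.

Lemma branch_below0 a : a \in atoms -> branch_below a \bot = set0.
Proof.
case/atomP=> _ a_neq0 _; apply/setP=> q; rewrite !inE lex0.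
by apply/negP=> /and3P[_ + /eqP q0]; rewrite q0 lex0 (negbTE a_neq0).
Qed.

Lemma branch_belowU a x y :
  branch_below a (x `|` y) = branch_below a x :|: branch_below a y.
Proof.
apply/setP=> q; rewrite !inE; case jq: (join_irr q) => //=.
case: (a <= q) => //=; apply/idP/idP; first exact: join_irr_leU.
by case/orP=> /le_trans; apply; rewrite ?leUl ?leUr.
Qed.

Lemma branch_belowI a x y :
  branch_below a (x `&` y) = branch_below a x :&: branch_below a y.
Proof. by apply/setP=> q; rewrite !inE lexI; case: (join_irr q); case: (a <= q). Qed.

Lemma le_of_branch_below x y :
  (forall a, a \in atoms -> branch_below a x \subset branch_below a y) -> x <= y.
Proof.
move=> sub; apply: le_join_irr => p jp px.
case: (eqVneq p \bot) => [->|p_neq0]; first exact: le0x.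
have [a aA ap] := exists_atom_le jp p_neq0.
have /(subsetP (sub a aA)) : p \in branch_below a x by rewrite inE jp ap px.
by rewrite inE => /and3P[].
Qed.

Definition atom_of (i : 'I_#|atoms|) : L := enum_val i.

Lemma atom_ofP i : atom_of i \in atoms. Proof. exact: enum_valP. Qed.

Definition branch_height i := #|branch (atom_of i)|.+1.

Lemma card_branch_below_lt x i : (#|branch_below (atom_of i) x| < branch_height i)%N.
Proof. by rewrite ltnS subset_leq_card // branch_below_sub. Qed.

Definition coord x : {dffun forall i : 'I_#|atoms|, 'I_(branch_height i)} :=
  [ffun i => Ordinal (card_branch_below_lt x i)].

Lemma coordE x i : coord x i = #|branch_below (atom_of i) x| :> nat.
Proof. by rewrite ffunE. Qed.

End JoinIrreducibles.

Section Tree.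
Variables (disp : Order.disp_t) (L : finTBDistrLatticeType disp).
Hypothesis acyclic : hasseJ_acyclic (L:=L).
Implicit Types (a b p q r x y z : L).

Definition hasseJ_avoid x : rel L := fun u v => [&& hasseJ u v, u != x & v != x].

Lemma hasseJ_avoid_sym x : symmetric (hasseJ_avoid x).
Proof. by move=> u v; rewrite /hasseJ_avoid hasseJ_sym; congr (_ && _); apply: andbC. Qed.

Lemma hasseJ_neq x y : hasseJ x y -> x != y.
Proof. by case/orP=> /Jcovers_lt; rewrite ?lt_neqAle 1?eq_sym => /andP[]. Qed.

Lemma notin_path_avoid x a s : path (hasseJ_avoid x) a s -> x \notin s.
Proof.
elim: s a => //= b s IH a /andP[/and3P[_ _ bx] pb].
by rewrite inE negb_or eq_sym bx (IH b pb).
Qed.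

(* A path from a to b avoiding x, closed up through x, would be a cycle. *)
Lemma hasseJ_avoid_disconnected x a b : hasseJ x a -> hasseJ x b -> a != b ->
  ~~ connect (hasseJ_avoid x) a b.
Proof.
move=> xa xb ab; apply/negP=> /connectP[s ps b_last].
move: ab xb; rewrite {}b_last; case: (shortenP ps) => s' ps' us' _ ab xb.
have s'_neq0 : s' != [::] by case: s' {ps' us' xb} ab; rewrite /= ?eqxx.
have x_notin : x \notin a :: s'.
  by rewrite inE negb_or (hasseJ_neq xa) (notin_path_avoid ps').
have size3 : (3 <= size [:: x, a & s'])%N by case: s' s'_neq0 {ps' us' ab xb x_notin}.
have := @acyclic _ _ size3; rewrite cons_uniq x_notin us' => /(_ isT).
rewrite /cycle /= xa rcons_path (sub_path _ ps') => [|u v /andP[] //].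
by rewrite hasseJ_sym xb.
Qed.

Lemma connect_avoid_bot x y : join_irr y -> y < x -> connect (hasseJ_avoid x) y \bot.
Proof.
elim/lt_ind: y => y IH jy yx; case: (eqVneq y \bot) => [->|y_neq0].
  exact: connect0.
have y_gt0 : \bot < y by rewrite lt0x.
have [z [jz _ zy]] := exists_Jcovers_below (join_irr0 L) jy y_gt0.
have zx := lt_trans (Jcovers_lt zy) yx.
apply: connect_trans (connect1 _) (IH z (Jcovers_lt zy) jz zx).
by rewrite /hasseJ_avoid /hasseJ zy orbT (lt_eqF yx) (lt_eqF zx).
Qed.

Lemma Jcovers_lower_uniq a b x : Jcovers a x -> Jcovers b x -> a = b.
Proof.
move=> ax bx; apply/eqP/negPn/negP=> ab.
have /JcoversP[ja _ _ _] := ax; have /JcoversP[jb _ _ _] := bx.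
have [xa xb] : hasseJ x a /\ hasseJ x b by rewrite /hasseJ ax bx !orbT.
move/negP: (hasseJ_avoid_disconnected xa xb ab); apply.
apply: connect_trans (connect_avoid_bot ja (Jcovers_lt ax)) _.
by rewrite (sym_connect_sym (hasseJ_avoid_sym x)) connect_avoid_bot ?Jcovers_lt.
Qed.

Lemma join_irr_below_total r p q : join_irr r -> join_irr p -> join_irr q ->
  p <= r -> q <= r -> p >=< q.
Proof.
elim/lt_ind: r p q => r IH p q jr jp jq pr qr.
case: (eqVneq p r) => [->|p_neq_r]; first by rewrite /Order.comparable qr orbT.
case: (eqVneq q r) => [->|q_neq_r]; first by rewrite /Order.comparable pr.
have [pr' qr'] : p < r /\ q < r by rewrite !lt_neqAle p_neq_r q_neq_r.
have [z [jz pz c1]] := exists_Jcovers_below jp jr pr'.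
have [z' [_ qz' c2]] := exists_Jcovers_below jq jr qr'.
rewrite (Jcovers_lower_uniq c2 c1) in qz'.
exact: IH (Jcovers_lt c1) _ _ jz jp jq pz qz'.
Qed.

Lemma atom_le_uniq a b p : a \in atoms L -> b \in atoms L -> join_irr p ->
  a <= p -> b <= p -> a = b.
Proof.
move=> aA bA jp ap bp.
have [ja a_neq0 a_min] := atomP aA; have [jb b_neq0 b_min] := atomP bA.
have [ab|ba|//] := comparable_ltgtP (join_irr_below_total jp ja jb ap bp).
- by move/eqP: a_neq0; case; apply: b_min.
- by move/eqP: b_neq0; case; apply: a_min.
Qed.

Lemma branch_below_other_atom a b q : a \in atoms L -> b \in atoms L -> b != a ->
  q \in branch a -> branch_below b q = set0.
Proof.
move=> aA bA ba; rewrite inE => /andP[jq aq]; apply/setP=> w; rewrite !inE.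
apply/negP=> /and3P[jw bw wq].
by rewrite (atom_le_uniq bA aA jq (le_trans bw wq) aq) eqxx in ba.
Qed.

End Tree.

Section Square.
Variables (disp : Order.disp_t) (L : finTBDistrLatticeType disp).
Hypothesis square : square_lattice (L:=L).
Implicit Types (a b p q r x y : L).

Let acyclic : hasseJ_acyclic (L:=L) := square.1.2.

Lemma Jcovers_upper_uniq r u1 u2 : join_irr r -> r != \bot ->
  Jcovers r u1 -> Jcovers r u2 -> u1 = u2.
Proof.
move=> jr r_neq0 r1 r2; apply/eqP/negPn/negP=> u12.
have r_gt0 : \bot < r by rewrite lt0x.
have [l [_ _ lr]] := exists_Jcovers_below (join_irr0 L) jr r_gt0.
have [l1 l2] : l < u1 /\ l < u2 by rewrite !(lt_trans (Jcovers_lt lr)) ?Jcovers_lt.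
have : (#|[:: l; u1; u2]| <= #|[set y | hasseJ r y]|)%N.
  apply/subset_leq_card/subsetP=> y; rewrite !inE => /or3P[]/eqP->;
  by rewrite /hasseJ ?lr ?r1 ?r2 ?orbT.
rewrite (card_uniqP _); last by rewrite /= !inE negb_or (lt_eqF l1) (lt_eqF l2) u12.
by move/leq_trans/(_ (square.2 r jr r_neq0)).
Qed.

Lemma join_irr_above_total r p q : join_irr r -> r != \bot ->
  join_irr p -> join_irr q -> r <= p -> r <= q -> p >=< q.
Proof.
elim/gt_ind: r p q => r IH p q jr r_neq0 jp jq rp rq.
case: (eqVneq p r) => [->|p_neq_r]; first by rewrite /Order.comparable rq.
case: (eqVneq q r) => [->|q_neq_r]; first by rewrite /Order.comparable rp orbT.
have [rp' rq'] : r < p /\ r < q by rewrite !lt_neqAle ![r == _]eq_sym p_neq_r q_neq_r.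
have [z [jz c1 zp]] := exists_Jcovers_above jr jp rp'.
have [z' [_ c2 zq]] := exists_Jcovers_above jr jq rq'.
rewrite -(Jcovers_upper_uniq jr r_neq0 c1 c2) in zq.
have z_neq0 : z != \bot by rewrite -lt0x (le_lt_trans (le0x r) (Jcovers_lt c1)).
exact: IH (Jcovers_lt c1) _ _ jz z_neq0 jp jq zp zq.
Qed.

Lemma branch_below_total a x y : a \in atoms L ->
  (branch_below a x \subset branch_below a y) ||
  (branch_below a y \subset branch_below a x).
Proof.
move=> aA; have [ja a_neq0 _] := atomP aA.
case: (boolP (_ \subset _)) => //= /subsetPn[q]; rewrite !inE => /and3P[jq aq qx].
rewrite jq aq /= => qy; apply/subsetP=> w; rewrite !inE => /and3P[jw aw wy].
rewrite jw aw /=; case/orP: (join_irr_above_total ja a_neq0 jq jw aq aw) => le.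
  by rewrite (le_trans le wy) in qy.
exact: le_trans le qx.
Qed.

Lemma card_branch_belowU a x y : a \in atoms L ->
  #|branch_below a (x `|` y)| = maxn #|branch_below a x| #|branch_below a y|.
Proof.
move=> aA; rewrite branch_belowU.
case/orP: (branch_below_total x y aA) => sub.
  by rewrite (setUidPr sub); apply/esym/maxn_idPr/subset_leq_card.
by rewrite (setUidPl sub); apply/esym/maxn_idPl/subset_leq_card.
Qed.

Lemma card_branch_belowI a x y : a \in atoms L ->
  #|branch_below a (x `&` y)| = minn #|branch_below a x| #|branch_below a y|.
Proof.
move=> aA; rewrite branch_belowI.
case/orP: (branch_below_total x y aA) => sub.
  by rewrite (setIidPl sub); apply/esym/minn_idPl/subset_leq_card.
by rewrite (setIidPr sub); apply/esym/minn_idPr/subset_leq_card.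
Qed.

Lemma eq_branch_below a x y : a \in atoms L ->
  #|branch_below a x| = #|branch_below a y| -> branch_below a x = branch_below a y.
Proof.
move=> aA card_xy; apply/eqP.
case/orP: (branch_below_total x y aA) => sub; last rewrite eq_sym.
  by rewrite eqEcard sub card_xy /=.
by rewrite eqEcard sub card_xy /=.
Qed.

Lemma coord_inj : injective (@coord _ L).
Proof.
move=> x y coord_xy.
have eq_xy a : a \in atoms L -> branch_below a x = branch_below a y.
  move=> aA; apply: (eq_branch_below aA).
  by rewrite -(enum_rankK_in aA aA) -!coordE coord_xy.
by apply/eqP; rewrite eq_le !le_of_branch_below // => a aA; rewrite eq_xy.
Qed.

Lemma branch_below_succ a y q : a \in atoms L ->
  q \in branch a -> q \notin branch_below a y ->
  (forall w, w \in branch a -> w \notin branch_below a y -> ~~ (w < q)) ->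
  branch_below a q = q |: branch_below a y.
Proof.
move=> aA; rewrite inE => /andP[jq aq] qy qmin; have [ja a_neq0 _] := atomP aA.
have q_not_le_y : ~~ (q <= y) by move: qy; rewrite inE jq aq.
apply/setP=> w; rewrite !inE; apply/idP/idP.
  case/and3P=> jw aw wq; case: (eqVneq w q) => //= w_neq_q.
  rewrite jw aw /=; apply/contraT=> wy.
  by move: (qmin w); rewrite !inE jw aw wy lt_neqAle w_neq_q wq => /(_ isT isT).
case/orP=> [/eqP->|/and3P[jw aw wy]]; first by rewrite jq aq lexx.
rewrite jw aw /=; case/orP: (join_irr_above_total ja a_neq0 jq jw aq aw) => // qw.
by rewrite (le_trans qw wy) in q_not_le_y.
Qed.

Lemma exists_branch_level a k : a \in atoms L -> (k <= #|branch a|)%N ->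
  exists y, #|branch_below a y| = k /\
            forall b, b \in atoms L -> b != a -> branch_below b y = set0.
Proof.
move=> aA; elim: k => [|k IH] k_le.
  exists \bot; rewrite branch_below0 ?cards0 //.
  by split=> // b bA _; rewrite branch_below0.
have [y [card_y _]] := IH (ltnW k_le).
have : ~~ (branch a \subset branch_below a y).
  by apply/negP=> /subset_leq_card; rewrite card_y leqNgt k_le.
case/subsetPn=> q0 q0a q0y.
have [|q /andP[qa qy] qmin] :=
  @exists_minimal _ _ (fun w => (w \in branch a) && (w \notin branch_below a y)) q0.
  by rewrite q0a.
exists q; split; last by move=> b bA ba; apply: branch_below_other_atom aA bA ba qa.
rewrite (branch_below_succ aA qa qy) ?cardsU1 ?qy ?card_y // => w wa wy.
by apply: qmin; rewrite wa.
Qed.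

Lemma exists_coord_on (g : {dffun forall i : 'I_#|atoms L|, 'I_(branch_height i)})
    (s : seq 'I_#|atoms L|) :
  uniq s -> exists x, forall j,
    #|branch_below (atom_of j) x| = if j \in s then nat_of_ord (g j) else 0%N.
Proof.
elim: s => [|i s IH] /=.
  by move=> _; exists \bot => j; rewrite branch_below0 ?cards0 // atom_ofP.
case/andP=> i_notin_s /IH[x Hx].
have [y [card_y other_y]] := exists_branch_level (atom_ofP i) (ltn_ord (g i)).
exists (x `|` y) => j; rewrite card_branch_belowU ?atom_ofP // Hx in_cons.
case: (eqVneq j i) => [->|j_neq_i] /=; first by rewrite (negbTE i_notin_s) card_y max0n.
rewrite other_y ?cards0 ?maxn0 ?atom_ofP //.
by apply: contra j_neq_i => /eqP/enum_val_inj ->.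
Qed.

Lemma coord_bij : bijective (@coord _ L).
Proof.
have coord_surj g : exists x, coord x = g.
  have [x Hx] := exists_coord_on g (enum_uniq 'I_#|atoms L|).
  by exists x; apply/ffunP=> j; apply/val_inj; rewrite /= coordE Hx mem_enum.
apply: inj_card_bij coord_inj _; rewrite -(card_codom coord_inj).
apply/subset_leq_card/subsetP=> g _.
by have [x <-] := coord_surj g; apply: codom_f.
Qed.

End Square.

Theorem mainTheorem8 (disp : Order.disp_t) (L : finTBDistrLatticeType disp) :
  @square_lattice disp L ->
  exists (t : nat) (n : 'I_t -> nat)
         (f : L -> {dffun forall i : 'I_t, 'I_(n i)}),
    bijective f /\
    (forall (x y : L) (i : 'I_t),
        nat_of_ord (f (x `|` y) i) = maxn (f x i) (f y i)) /\
    (forall (x y : L) (i : 'I_t),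
        nat_of_ord (f (x `&` y) i) = minn (f x i) (f y i)).
Proof.
move=> square; exists #|atoms L|, (@branch_height _ L), (@coord _ L).
split; first exact: coord_bij square.
split=> x y i; rewrite !coordE.
- by rewrite card_branch_belowU ?atom_ofP.
- by rewrite card_branch_belowI ?atom_ofP.
Qed.
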